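(* Let $\mathcal{C}$ be a category and $A$ an object of $\mathcal{C}$ such that $[A,A]=\mathrm{Aut}(A)$ and: (R1) $\mathcal{C}$ has a terminal object and pullbacks; (R'2) $\mathcal{C}$ has quotients of objects by groups acting by automorphisms; (R3) $\mathcal{C}$ has small coproducts; (R'4) $[A,-]$ preserves quotients of objects by groups acting by automorphisms; (R5) $[A,-]$ preserves coproducts; (R6) $[A,-]$ reflects isomorphisms. Let $G=\mathrm{Aut}(A)^{op}$ and $[A,-]_G\colon\mathcal{C}\to\mathcal{E}ns^G$ send $X$ to $[A,X]$ with action $g\cdot x=x\circ g$. Then $[A,-]_G$ has a left adjoint $A\times_G(-)$ and they establish an equivalence of categories $\mathcal{C}\simeq\mathcal{E}ns^G$.
   Context: $\mathcal{E}ns^G$: the category of left $G$-sets. For a group $H$ acting on an object $X$ by automorphisms (homomorphism $H\to\mathrm{Aut}(X)^{op}$), the quotient $q\colon X\to X/H$ is universal among arrows with $q\circ h=q$ for all $h\in H$. ''$[A,-]$ preserves this quotient'' means $[A,X]\to[A,X/H]$, $f\mapsto q\circ f$, is the quotient (orbit set) of $[A,X]$ by the action $f\mapsto h\circ f$ of $H$. *)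

From Stdlib Require Import ProofIrrelevance FunctionalExtensionality.
Set Implicit Arguments.
Unset Strict Implicit.

Record Category := {
  Obj :> Type;
  Hom : Obj -> Obj -> Type;
  idm : forall a, Hom a a;
  comp : forall a b c, Hom b c -> Hom a b -> Hom a c;
  comp_assoc : forall a b c d (h : Hom c d) (g : Hom b c) (f : Hom a b),
      comp h (comp g f) = comp (comp h g) f;
  comp_id_l : forall a b (f : Hom a b), comp (idm b) f = f;
  comp_id_r : forall a b (f : Hom a b), comp f (idm a) = f
}.
Arguments Hom {c0} _ _.
Arguments idm {c0} a.
Arguments comp {c0 a b c} _ _.
Notation "g \o f" := (comp g f) (at level 40, left associativity).

Section Notions.
Variable C : Category.

Definition is_iso {X Y : C} (f : Hom X Y) : Prop :=
  exists g : Hom Y X, g \o f = idm X /\ f \o g = idm Y.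

Definition is_terminal (T : C) : Prop :=
  forall X : C, exists f : Hom X T, forall g : Hom X T, g = f.

Definition is_pullback {X Y Z P : C} (f : Hom X Z) (g : Hom Y Z)
    (p1 : Hom P X) (p2 : Hom P Y) : Prop :=
  f \o p1 = g \o p2 /\
  forall (W : C) (a : Hom W X) (b : Hom W Y), f \o a = g \o b ->
    exists u : Hom W P, (p1 \o u = a /\ p2 \o u = b) /\
      forall v : Hom W P, p1 \o v = a -> p2 \o v = b -> v = u.

Definition has_terminal : Prop := exists T : C, is_terminal T.

Definition has_pullbacks : Prop :=
  forall (X Y Z : C) (f : Hom X Z) (g : Hom Y Z),
    exists (P : C) (p1 : Hom P X) (p2 : Hom P Y), is_pullback f g p1 p2.

End Notions.

Record Group := {
  gcar :> Type;
  gmul : gcar -> gcar -> gcar;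
  gone : gcar;
  ginv : gcar -> gcar;
  gmulA : forall x y z, gmul x (gmul y z) = gmul (gmul x y) z;
  gmul1 : forall x, gmul gone x = x;
  gmulV : forall x, gmul (ginv x) x = gone
}.
Arguments gmul : clear implicits.
Arguments gone : clear implicits.
Arguments ginv : clear implicits.

Record Action (C : Category) (H : Group) (X : C) := {
  act :> gcar H -> Hom X X;
  act_one : act (gone H) = idm X;
  act_mul : forall g h : gcar H, act (gmul H g h) = act h \o act g
}.
Arguments Action : clear implicits.
Arguments act {C H X} _ _.

Section Notions2.
Variable C : Category.

Definition is_quotient {H : Group} {X Q : C} (a : Action C H X) (q : Hom X Q) : Prop :=
  (forall h, q \o a h = q) /\
  forall (Y : C) (f : Hom X Y), (forall h, f \o a h = f) ->
    exists u : Hom Q Y, u \o q = f /\ forall v : Hom Q Y, v \o q = f -> v = u.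

Definition has_group_quotients : Prop :=
  forall (H : Group) (X : C) (a : Action C H X),
    exists (Q : C) (q : Hom X Q), is_quotient a q.

Definition is_coproduct {I : Type} (X : I -> C) (S : C)
    (inj : forall i, Hom (X i) S) : Prop :=
  forall (Y : C) (f : forall i, Hom (X i) Y),
    exists u : Hom S Y, (forall i, u \o inj i = f i) /\
      forall v : Hom S Y, (forall i, v \o inj i = f i) -> v = u.

Definition has_small_coproducts : Prop :=
  forall (I : Type) (X : I -> C),
    exists (S : C) (inj : forall i, Hom (X i) S), is_coproduct inj.

Definition bijective {U V : Type} (f : U -> V) : Prop :=
  (forall x y, f x = f y -> x = y) /\ (forall y, exists x, f x = y).

Variable A : C.

(** (R'4) [A,-] preserves quotients: [A,X] -> [A,X/H], x |-> q \o x, is the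
    orbit set of [A,X] under x |-> h \o x. *)
Definition homA_preserves_quotients : Prop :=
  forall (H : Group) (X Q : C) (a : Action C H X) (q : Hom X Q),
    is_quotient a q ->
      (forall y : Hom A Q, exists x : Hom A X, q \o x = y) /\
      (forall x x' : Hom A X, q \o x = q \o x' <-> exists h, x' = a h \o x).

Definition homA_preserves_coproducts : Prop :=
  forall (I : Type) (X : I -> C) (S : C) (inj : forall i, Hom (X i) S),
    is_coproduct inj ->
      bijective (fun p : {i : I & Hom A (X i)} => inj (projT1 p) \o projT2 p).

Definition homA_reflects_isos : Prop :=
  forall (X Y : C) (f : Hom X Y), bijective (fun x : Hom A X => f \o x) -> is_iso f.

End Notions2.

Record Functor (C D : Category) := {
  Fobj :> C -> D;
  Fhom : forall a b, Hom a b -> Hom (Fobj a) (Fobj b);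
  Fid : forall a, Fhom (idm a) = idm (Fobj a);
  Fcomp : forall a b c (g : Hom b c) (f : Hom a b),
      Fhom (g \o f) = Fhom g \o Fhom f
}.
Arguments Fhom {C D} f0 {a b} _.

Definition is_adjoint_equivalence {C D : Category} (L : Functor D C) (R : Functor C D)
    (eta : forall Y : D, Hom Y (R (L Y))) (eps : forall X : C, Hom (L (R X)) X) : Prop :=
  (forall (Y Y' : D) (f : Hom Y Y'), Fhom R (Fhom L f) \o eta Y = eta Y' \o f) /\
  (forall (X X' : C) (f : Hom X X'), f \o eps X = eps X' \o Fhom L (Fhom R f)) /\
  (forall X : C, Fhom R (eps X) \o eta (R X) = idm (R X)) /\
  (forall Y : D, eps (L Y) \o Fhom L (eta Y) = idm (L Y)) /\
  (forall Y : D, is_iso (eta Y)) /\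
  (forall X : C, is_iso (eps X)).
Arguments is_adjoint_equivalence {C D} L R eta eps.

(** Under the standing hypothesis [A,A] = Aut(A), the elements of G are the
    arrows A -> A; the product in G is g *_G h = h \o g, so a left action
    satisfies (h \o g) . x = g . (h . x). *)
Section GSets.
Variables (C : Category) (A : C).

Record GSet := {
  gs_car :> Type;
  gs_act : Hom A A -> gs_car -> gs_car;
  gs_act_id : forall x, gs_act (idm A) x = x;
  gs_act_mul : forall g h x, gs_act (h \o g) x = gs_act g (gs_act h x)
}.
Arguments gs_act : clear implicits.

Definition GHom (S T : GSet) : Type :=
  {f : S -> T | forall g x, f (gs_act S g x) = gs_act T g (f x)}.

Lemma GHom_ext (S T : GSet) (f f' : GHom S T) : proj1_sig f = proj1_sig f' -> f = f'.
Proof.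
  destruct f as [f pf], f' as [f' pf']; simpl; intros ->.
  f_equal; apply proof_irrelevance.
Qed.

Definition GHom_id (S : GSet) : GHom S S.
Proof. exists (fun x => x). intros; reflexivity. Defined.

Definition GHom_comp (S T U : GSet) (g : GHom T U) (f : GHom S T) : GHom S U.
Proof.
  exists (fun x => proj1_sig g (proj1_sig f x)).
  intros h x. rewrite (proj2_sig f), (proj2_sig g). reflexivity.
Defined.

Definition GSetCat : Category.
Proof.
  refine (@Build_Category GSet GHom GHom_id GHom_comp _ _ _);
  intros; apply GHom_ext; reflexivity.
Defined.

Definition homA_GSet (X : C) : GSet.
Proof.
  refine (@Build_GSet (Hom A X) (fun g x => x \o g) _ _).
  - intros x; apply comp_id_r.
  - intros g h x; apply comp_assoc.
Defined.

Definition homA_GHom (X Y : C) (f : Hom X Y) : GHom (homA_GSet X) (homA_GSet Y).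
Proof.
  exists (fun x => f \o x). intros g x; simpl. apply comp_assoc.
Defined.

Definition homA_G : Functor C GSetCat.
Proof.
  refine (@Build_Functor C GSetCat homA_GSet homA_GHom _ _).
  - intros a; apply GHom_ext; simpl. apply functional_extensionality; intros x.
    apply comp_id_l.
  - intros a b c g f; apply GHom_ext; simpl. apply functional_extensionality; intros x.
    symmetry; apply comp_assoc.
Defined.
End GSets.

From Stdlib Require Import ClassicalEpsilon FunctionalExtensionality.

(* The inverse equivalence sends a G-set Y to A x_G Y, the quotient of the
   coproduct of copies of A indexed by Y under the diagonal action of G; the
   unit y |-> [y, id_A] is the coprojection into this quotient.  By (R'4) and
   (R5), [A, A x_G Y] is the orbit set of Y x [A,A] under G, and since every
   endomorphism of A is invertible each orbit meets Y x {id_A} in exactly one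
   point, so the unit is bijective.  The counit A x_G [A,X] -> X sends [x, a]
   to x o a; it is inverse to the unit on [A,X], so [A,-] sends it to a
   bijection and (R6) makes it an isomorphism. *)

Local Notation choice h := (constructive_indefinite_description _ h).

Section Coproducts.
Variables (C : Category) (I : Type) (X : I -> C) (S : C)
  (inj : forall i, Hom (X i) S).
Hypothesis coprodS : is_coproduct inj.

Definition copair {Y : C} (f : forall i, Hom (X i) Y) : Hom S Y :=
  proj1_sig (choice (coprodS Y f)).

Lemma copair_inj (Y : C) (f : forall i, Hom (X i) Y) (i : I) :
  copair f \o inj i = f i.
Proof. exact (proj1 (proj2_sig (choice (coprodS Y f))) i). Qed.

Lemma coproduct_hom_ext (Y : C) (u v : Hom S Y) :
  (forall i, u \o inj i = v \o inj i) -> u = v.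
Proof.
  intros E.
  destruct (coprodS Y (fun i => v \o inj i)) as [w [_ w_uniq]].
  rewrite (w_uniq u E); symmetry; apply w_uniq; reflexivity.
Qed.
End Coproducts.
Arguments copair {C I X S inj} coprodS {Y} f.
Arguments copair_inj {C I X S inj} coprodS {Y} f i.
Arguments coproduct_hom_ext {C I X S inj} coprodS {Y} u v _.

Section Quotients.
Variables (C : Category) (H : Group) (X Q : C) (a : Action C H X) (q : Hom X Q).
Hypothesis quotQ : is_quotient a q.

Definition quotient_lift {Y : C} (f : Hom X Y) (f_inv : forall h, f \o a h = f) :
  Hom Q Y := proj1_sig (choice (proj2 quotQ Y f f_inv)).

Lemma quotient_lift_comp (Y : C) (f : Hom X Y) (f_inv : forall h, f \o a h = f) :
  quotient_lift f f_inv \o q = f.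
Proof. exact (proj1 (proj2_sig (choice (proj2 quotQ Y f f_inv)))). Qed.

Lemma quotient_hom_ext (Y : C) (u v : Hom Q Y) : u \o q = v \o q -> u = v.
Proof.
  intros E.
  assert (vq_inv : forall h, (v \o q) \o a h = v \o q).
  { intros h; rewrite <- comp_assoc, (proj1 quotQ h); reflexivity. }
  destruct (proj2 quotQ Y (v \o q) vq_inv) as [w [_ w_uniq]].
  rewrite (w_uniq u E); symmetry; apply w_uniq; reflexivity.
Qed.
End Quotients.
Arguments quotient_lift {C H X Q a q} quotQ {Y} f f_inv.
Arguments quotient_lift_comp {C H X Q a q} quotQ {Y} f f_inv.
Arguments quotient_hom_ext {C H X Q a q} quotQ {Y} u v _.

Lemma GHom_bijective_is_iso (C : Category) (A : C) (S T : GSet A)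
    (f : GHom S T) :
  bijective (proj1_sig f) -> @is_iso (GSetCat A) S T f.
Proof.
  intros [f_inj f_surj].
  pose (g y := proj1_sig (choice (f_surj y))).
  assert (fg : forall y, proj1_sig f (g y) = y).
  { intros y; exact (proj2_sig (choice (f_surj y))). }
  assert (g_equiv : forall h y, g (gs_act h y) = gs_act h (g y)).
  { intros h y; apply f_inj; rewrite (proj2_sig f), !fg; reflexivity. }
  exists (exist _ g g_equiv); split; apply GHom_ext, functional_extensionality;
    simpl; intros y.
  - apply f_inj, fg.
  - apply fg.
Qed.

Section Automorphisms.
Variables (C : Category) (A : C).
Hypothesis endo_iso : forall f : Hom A A, is_iso f.

Definition autinv (f : Hom A A) : Hom A A := proj1_sig (choice (endo_iso f)).

Lemma autinv_l (f : Hom A A) : autinv f \o f = idm A.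
Proof. exact (proj1 (proj2_sig (choice (endo_iso f)))). Qed.

Lemma autinv_r (f : Hom A A) : f \o autinv f = idm A.
Proof. exact (proj2 (proj2_sig (choice (endo_iso f)))). Qed.

Lemma autinv_unique (f k : Hom A A) : k \o f = idm A -> k = autinv f.
Proof.
  intros E.
  rewrite <- (comp_id_r k), <- (autinv_r f), comp_assoc, E, comp_id_l.
  reflexivity.
Qed.

Lemma autinv_id : autinv (idm A) = idm A.
Proof. symmetry; apply autinv_unique, comp_id_l. Qed.

Lemma autinv_comp (g h : Hom A A) : autinv (h \o g) = autinv g \o autinv h.
Proof.
  symmetry; apply autinv_unique.
  rewrite <- comp_assoc, (comp_assoc (autinv h)), autinv_l, comp_id_l.
  apply autinv_l.
Qed.

Definition Aut_op : Group.
Proof.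
  refine (@Build_Group (Hom A A) (fun g h => h \o g) (idm A) autinv _ _ _).
  - intros; symmetry; apply comp_assoc.
  - intros; apply comp_id_r.
  - intros; apply autinv_r.
Defined.
End Automorphisms.
Arguments autinv {C A} endo_iso f.
Arguments autinv_l {C A} endo_iso f.
Arguments autinv_r {C A} endo_iso f.
Arguments Aut_op {C A} endo_iso.

Section Tensor.
Variables (C : Category) (A : C).
Hypothesis endo_iso : forall f : Hom A A, is_iso f.
Hypothesis quotients : has_group_quotients C.
Hypothesis coproducts : has_small_coproducts C.
Hypothesis homA_quotients : homA_preserves_quotients A.
Hypothesis homA_coproducts : homA_preserves_coproducts A.

Local Notation inv := (autinv endo_iso).
Local Notation G := (Aut_op endo_iso).

Section OneGSet.
Variable Y : GSet A.

Let coprod := choice (coproducts Y (fun _ : Y => A)).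
Definition copies : C := proj1_sig coprod.
Definition copies_in : forall y : Y, Hom A copies :=
  proj1_sig (choice (proj2_sig coprod)).
Lemma copies_coproduct : is_coproduct copies_in.
Proof. exact (proj2_sig (choice (proj2_sig coprod))). Qed.

(* The diagonal action, chosen so that [g . y, a] = [y, g o a] in the quotient. *)
Definition copies_act (h : Hom A A) : Hom copies copies :=
  copair copies_coproduct (fun y => copies_in (gs_act (inv h) y) \o h).

Lemma copies_act_in (h : Hom A A) (y : Y) :
  copies_act h \o copies_in y = copies_in (gs_act (inv h) y) \o h.
Proof. exact (copair_inj copies_coproduct _ y). Qed.

Definition copies_action : Action C G copies.
Proof.
  refine (@Build_Action C G copies copies_act _ _).
  - apply (coproduct_hom_ext copies_coproduct); intros y.
    rewrite copies_act_in, autinv_id, gs_act_id, comp_id_r, comp_id_l.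
    reflexivity.
  - intros g h; simpl in g, h |- *.
    apply (coproduct_hom_ext copies_coproduct); intros y.
    rewrite (copies_act_in (h \o g)), <- comp_assoc, (copies_act_in g),
      (comp_assoc (copies_act h)), (copies_act_in h), autinv_comp, gs_act_mul,
      comp_assoc.
    reflexivity.
Defined.

Let quot := choice (quotients G copies copies_action).
Definition tensor : C := proj1_sig quot.
Definition tensor_quot : Hom copies tensor :=
  proj1_sig (choice (proj2_sig quot)).
Lemma tensor_quotient : is_quotient copies_action tensor_quot.
Proof. exact (proj2_sig (choice (proj2_sig quot))). Qed.

Definition tensor_in (y : Y) : Hom A tensor := tensor_quot \o copies_in y.

Lemma tensor_hom_ext (Z : C) (u v : Hom tensor Z) :
  (forall y, u \o tensor_in y = v \o tensor_in y) -> u = v.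
Proof.
  intros E.
  apply (quotient_hom_ext tensor_quotient), (coproduct_hom_ext copies_coproduct).
  intros y; rewrite <- !comp_assoc; apply E.
Qed.

Lemma tensor_in_act (g : Hom A A) (y : Y) :
  tensor_in (gs_act g y) = tensor_in y \o g.
Proof.
  assert (E : copies_act g \o copies_in (gs_act g y) = copies_in y \o g).
  { rewrite copies_act_in, <- gs_act_mul, autinv_r, gs_act_id; reflexivity. }
  unfold tensor_in.
  rewrite <- comp_assoc, <- E, comp_assoc.
  symmetry; exact (f_equal (fun k => k \o _) (proj1 tensor_quotient g)).
Qed.

Lemma tensor_in_inj (y y' : Y) : tensor_in y = tensor_in y' -> y = y'.
Proof.
  intros E.
  destruct (proj1 (proj2 (homA_quotients _ _ _ _ _ tensor_quotient) _ _) E)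
    as [h Eh].
  simpl in Eh; rewrite copies_act_in in Eh.
  assert (same_point : existT (fun _ => Hom A A) y' (idm A)
                     = existT _ (gs_act (inv h) y) h).
  { apply (proj1 (homA_coproducts _ _ _ _ copies_coproduct)); simpl.
    rewrite comp_id_r; exact Eh. }
  apply (f_equal (fun p : {_ : Y & Hom A A} => gs_act (projT2 p) (projT1 p)))
    in same_point.
  simpl in same_point.
  rewrite gs_act_id, <- gs_act_mul, autinv_l, gs_act_id in same_point.
  symmetry; exact same_point.
Qed.

Lemma tensor_in_surj (x : Hom A tensor) : exists y, tensor_in y = x.
Proof.
  destruct (proj1 (homA_quotients _ _ _ _ _ tensor_quotient) x) as [x0 E0].
  destruct (proj2 (homA_coproducts _ _ _ _ copies_coproduct) x0) as [[y f] Ef].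
  simpl in Ef.
  exists (gs_act f y).
  rewrite tensor_in_act; unfold tensor_in.
  rewrite <- comp_assoc, Ef; exact E0.
Qed.

Lemma copair_act_invariant (Z : C) (f : Y -> Hom A Z)
    (f_equiv : forall g y, f (gs_act g y) = f y \o g) (h : Hom A A) :
  copair copies_coproduct f \o copies_act h = copair copies_coproduct f.
Proof.
  apply (coproduct_hom_ext copies_coproduct); intros y.
  rewrite <- comp_assoc, copies_act_in, comp_assoc,
    !(copair_inj copies_coproduct f), <- f_equiv,
    <- gs_act_mul, autinv_l, gs_act_id.
  reflexivity.
Qed.

Definition tensor_lift {Z : C} (f : Y -> Hom A Z)
    (f_equiv : forall g y, f (gs_act g y) = f y \o g) : Hom tensor Z :=
  quotient_lift tensor_quotient (copair copies_coproduct f)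
    (copair_act_invariant Z f f_equiv).

Lemma tensor_lift_in (Z : C) (f : Y -> Hom A Z)
    (f_equiv : forall g y, f (gs_act g y) = f y \o g) (y : Y) :
  tensor_lift f f_equiv \o tensor_in y = f y.
Proof.
  unfold tensor_lift, tensor_in.
  rewrite comp_assoc, quotient_lift_comp; apply (copair_inj copies_coproduct f).
Qed.

Definition tensor_unit : GHom Y (homA_GSet A tensor).
Proof. exists tensor_in; exact tensor_in_act. Defined.

Lemma tensor_unit_iso : @is_iso (GSetCat A) _ _ tensor_unit.
Proof.
  apply GHom_bijective_is_iso; split.
  - exact tensor_in_inj.
  - exact tensor_in_surj.
Qed.
End OneGSet.
Arguments tensor_in {Y} y.
Arguments tensor_lift {Y Z} f f_equiv.
Arguments tensor_in_surj {Y} x.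

Definition tensor_map {Y Y' : GSet A} (phi : GHom Y Y') :
  Hom (tensor Y) (tensor Y').
Proof.
  refine (tensor_lift (fun y => tensor_in (proj1_sig phi y)) _).
  intros g y; rewrite (proj2_sig phi); apply tensor_in_act.
Defined.

Lemma tensor_map_in (Y Y' : GSet A) (phi : GHom Y Y') (y : Y) :
  tensor_map phi \o tensor_in y = tensor_in (proj1_sig phi y).
Proof. apply tensor_lift_in. Qed.

Definition tensor_functor : Functor (GSetCat A) C.
Proof.
  refine (@Build_Functor (GSetCat A) C tensor (@tensor_map) _ _).
  - intros Y; apply tensor_hom_ext; intros y.
    rewrite tensor_map_in, comp_id_l; reflexivity.
  - intros Y1 Y2 Y3 g f; apply tensor_hom_ext; intros y.
    rewrite <- comp_assoc, !tensor_map_in; reflexivity.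
Defined.

Definition tensor_counit (X : C) : Hom (tensor (homA_GSet A X)) X.
Proof.
  refine (tensor_lift (fun x : homA_GSet A X => x) _).
  intros g x; reflexivity.
Defined.

Lemma tensor_counit_in (X : C) (x : homA_GSet A X) :
  tensor_counit X \o tensor_in x = x.
Proof. apply tensor_lift_in. Qed.

Lemma homA_tensor_counit_bijective (X : C) :
  bijective (fun x : Hom A (tensor (homA_GSet A X)) => tensor_counit X \o x).
Proof.
  split.
  - intros x x' E.
    destruct (tensor_in_surj x) as [y <-], (tensor_in_surj x') as [y' <-].
    rewrite !tensor_counit_in in E; subst; reflexivity.
  - intros x; exists (tensor_in (x : homA_GSet A X)); apply tensor_counit_in.
Qed.

Lemma tensor_adjoint_equivalence (homA_isos : homA_reflects_isos A) :
  is_adjoint_equivalence tensor_functor (homA_G A) tensor_unit tensor_counit.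
Proof.
  split; [|split; [|split; [|split; [|split]]]].
  - intros Y Y' f; apply GHom_ext, functional_extensionality; intros y.
    apply tensor_map_in.
  - intros X X' f; apply tensor_hom_ext; intros x; simpl.
    rewrite <- !comp_assoc, tensor_map_in, !tensor_counit_in; reflexivity.
  - intros X; apply GHom_ext, functional_extensionality; intros x.
    apply tensor_counit_in.
  - intros Y; apply tensor_hom_ext; intros y; simpl.
    rewrite <- comp_assoc, tensor_map_in, comp_id_l; apply tensor_counit_in.
  - exact tensor_unit_iso.
  - intros X; apply homA_isos, homA_tensor_counit_bijective.
Qed.
End Tensor.

Theorem theorem5p17 (C : Category) (A : C)
  (hAut : forall f : Hom A A, is_iso f)                   (* [A,A] = Aut(A) *)
  (R1 : has_terminal C /\ has_pullbacks C)
  (R'2 : has_group_quotients C)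
  (R3 : has_small_coproducts C)
  (R'4 : homA_preserves_quotients A)
  (R5 : homA_preserves_coproducts A)
  (R6 : homA_reflects_isos A) :
  exists (L : Functor (GSetCat A) C)
         (eta : forall Y : GSetCat A, Hom Y (homA_G A (L Y)))
         (eps : forall X : C, Hom (L (homA_G A X)) X),
    is_adjoint_equivalence L (homA_G A) eta eps.
Proof.
  exists (tensor_functor C A hAut R'2 R3), (tensor_unit C A hAut R'2 R3),
    (tensor_counit C A hAut R'2 R3).
  exact (tensor_adjoint_equivalence C A hAut R'2 R3 R'4 R5 R6).
Qed.
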